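(* Let $\{x_k\}$ be generated by the Subgradient-InexP method with the exogenous stepsize rule, under the standing assumptions, and assume $\{x_k\}$ converges to a point $x_*\in\Omega^*$. Then there is $c>0$ with $\|s_k\|\le c$ for all $k$, and with $\Gamma:=\max\{1,c\}$ and $\rho:=\nu+2\mu$, $\nu=\frac{1+2\bar\gamma}{1-2\bar\lambda}$, for every $N\in\mathbb{N}$, $$\min\{f(x_k)-f^*:\ k=0,1,\dots,N\}\le \Gamma\,\frac{\|x_0-x_*\|^2+\rho\sum_{k=0}^N\alpha_k^2}{2\sum_{k=0}^N\alpha_k}.$$
   Context: Problem: minimize a convex $f:\mathbb{R}^n\to\mathbb{R}$ over a nonempty closed convex $C\subset\mathbb{R}^n$; $f^*:=\inf_{x\in C}f(x)$, $\Omega^*$ the set of minimizers. For $\epsilon\ge0$, $\partial_\epsilon f(x):=\{s: f(y)\ge f(x)+\langle s,y-x\rangle-\epsilon\ \forall y\}$. Relative error tolerance function: any $\varphi_{\gamma,\theta,\lambda}:(\mathbb{R}^n)^3\to[0,\infty)$ with $\varphi_{\gamma,\theta,\lambda}(u,v,w)\le\gamma\|v-u\|^2+\theta\|w-v\|^2+\lambda\|w-u\|^2$; for $u\in C$, $\mathcal{P}_C(\varphi_{\gamma,\theta,\lambda},u,v):=\{w\in C:\langle v-w,z-w\rangle\le\varphi_{\gamma,\theta,\lambda}(u,v,w)\ \forall z\in C\}$. Subgradient-InexP method: $x_0\in C$; at iteration $k$, if $0\in\partial f(x_k)$ stop; otherwise choose nonzero $s_k\in\partial_{\epsilon_k}f(x_k)$,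 stepsize $t_k>0$, and $x_{k+1}\in\mathcal{P}_C(\varphi_{\gamma_k,\theta_k,\lambda_k},x_k,x_k-t_ks_k)$. Standing assumptions: $\gamma_k\in[0,\bar\gamma)$, $\theta_k\in[0,\bar\theta)$, $\lambda_k\in[0,\bar\lambda)$ with $\bar\gamma\ge0$, $\bar\theta,\bar\lambda\in[0,1/2)$; the sequence is infinite. Exogenous stepsize rule: $\mu\ge0$; $\{\alpha_k\}$, $\{\epsilon_k\}$ nonnegative, $\{\epsilon_k\}$ nonincreasing, $\sum_k\alpha_k=+\infty$, $\sum_k\alpha_k^2<+\infty$, $\epsilon_k\le\mu\alpha_k$; $t_k:=\alpha_k/\eta_k$, $\eta_k:=\max\{1,\|s_k\|\}$. *)

From HB Require Import structures.
From mathcomp Require Import all_boot all_order all_algebra.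
From mathcomp Require Import all_classical all_reals all_analysis.
Set Implicit Arguments. Unset Strict Implicit. Unset Printing Implicit Defensive.
Import Order.TTheory GRing.Theory Num.Theory.
Import numFieldNormedType.Exports.
Local Open Scope classical_set_scope.
Local Open Scope ring_scope.

Section Defs.
Variables (R : realType) (n : nat).
Notation V := 'rV[R]_n.

Definition dotp (u v : V) : R := \sum_(i < n) u 0 i * v 0 i.
Definition enorm (u : V) : R := Num.sqrt (dotp u u).

Definition convex_fun (f : V -> R) : Prop :=
  forall x y (l : R), 0 <= l <= 1 ->
    f (l *: x + (1 - l) *: y) <= l * f x + (1 - l) * f y.

Definition eps_subdiff (f : V -> R) (eps : R) (x : V) : set V :=
  [set s | forall y, f y >= f x + dotp s (y - x) - eps].

Definition subdiff (f : V -> R) (x : V) : set V := eps_subdiff f 0 x.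

Definition fstar (f : V -> R) (C : set V) : R := inf [set f x | x in C].
Definition Omega_star (f : V -> R) (C : set V) : set V :=
  [set x | C x /\ f x = fstar f C].

Definition rel_err_tol (g th la : R) (phi : V -> V -> V -> R) : Prop :=
  forall u v w, 0 <= phi u v w /\
    phi u v w <= g * enorm (v - u) ^+ 2 + th * enorm (w - v) ^+ 2
                 + la * enorm (w - u) ^+ 2.

Definition inexP (C : set V) (phi : V -> V -> V -> R) (u v : V) : set V :=
  [set w | C w /\ forall z, C z -> dotp (v - w) (z - w) <= phi u v w].

End Defs.

From HB Require Import structures.
From mathcomp Require Import all_boot all_order all_algebra.
From mathcomp Require Import all_classical all_reals all_analysis.
From mathcomp Require Import ring lra.
Set Implicit Arguments. Unset Strict Implicit. Unset Printing Implicit Defensive.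
Import Order.TTheory GRing.Theory Num.Theory.
Import numFieldNormedType.Exports.
Local Open Scope classical_set_scope.
Local Open Scope ring_scope.

(* For one iteration u = x_k, v = u - t s, w = x_{k+1}:
   - testing the inexact projection inequality with z = u and with any z in C
     gives |w - z|^2 <= |v - z|^2 + (nu - 1) |v - u|^2 (inexP_sq_dist);
   - the eps-subgradient inequality gives
     |v - z|^2 <= |u - z|^2 - 2 t (f u - f z) + 2 t eps + t^2 |s|^2;
   - with t |s| <= alpha, t <= alpha, eps <= mu alpha this yields the descent
     inequality 2 t (f u - f z) <= |u - z|^2 - |w - z|^2 + rho alpha^2.
   Since x_k converges it stays in a box; a convex function is bounded above on
   boxes, hence eps-subgradients at the x_k are uniformly bounded by some c.
   Then alpha_k <= max(1, c) t_k, and telescoping the descent inequality at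
   z = x_* and comparing the minimum with a weighted average gives the rate. *)

Section Euclid.
Variables (R : realType) (n : nat).
Notation V := 'rV[R]_n.
Implicit Types (u v w z : V).

Lemma dotpC u v : dotp u v = dotp v u.
Proof. by apply: eq_bigr => i _; rewrite mulrC. Qed.

Lemma dotpDl u v w : dotp (u + v) w = dotp u w + dotp v w.
Proof. by rewrite /dotp -big_split; apply: eq_bigr => i _; rewrite !mxE mulrDl. Qed.

Lemma dotpZl (a : R) u w : dotp (a *: u) w = a * dotp u w.
Proof. by rewrite /dotp mulr_sumr; apply: eq_bigr => i _; rewrite !mxE mulrA. Qed.

Lemma dotpNl u w : dotp (- u) w = - dotp u w.
Proof. by rewrite -scaleN1r dotpZl mulN1r. Qed.

Lemma dotpZr (a : R) u w : dotp w (a *: u) = a * dotp w u.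
Proof. by rewrite dotpC dotpZl dotpC. Qed.

Lemma dotpBr u v w : dotp w (u - v) = dotp w u - dotp w v.
Proof. by rewrite dotpC dotpDl dotpNl !(dotpC w). Qed.

Lemma dotp_ge0 u : 0 <= dotp u u.
Proof. by apply: sumr_ge0 => i _; rewrite -expr2 sqr_ge0. Qed.

Lemma enorm_sq u : enorm u ^+ 2 = dotp u u.
Proof. by rewrite /enorm sqr_sqrtr // dotp_ge0. Qed.

Lemma enorm_ge0 u : 0 <= enorm u.
Proof. exact: sqrtr_ge0. Qed.

Lemma dotp_sqrB u v :
  dotp (u - v) (u - v) = dotp u u - 2 * dotp u v + dotp v v.
Proof. rewrite dotpDl dotpNl !dotpBr (dotpC v u); ring. Qed.

Lemma dotp_distC u v : dotp (u - v) (u - v) = dotp (v - u) (v - u).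
Proof. by rewrite -opprB dotpNl dotpC dotpNl opprK. Qed.

Lemma coord_le_enorm u i : `|u 0 i| <= enorm u.
Proof.
rewrite -sqrtr_sqr /enorm ler_sqrt ?dotp_ge0 //.
rewrite /dotp (bigD1 i) //= -expr2 lerDl.
by apply: sumr_ge0 => j _; rewrite -expr2 sqr_ge0.
Qed.

Lemma coord_le_mxnorm u i : `|u 0 i| <= `|u|.
Proof.
have -> : `|u| = mx_norm u by [].
by rewrite mx_normrE; apply: le_trans (le_bigmax _ _ (0, i)).
Qed.

End Euclid.

Section InexactStep.
Variables (R : realType) (n : nat).
Notation V := 'rV[R]_n.
Local Notation "| u |2" := (dotp u u) (at level 0, u at level 99).

(* Testing the defining inequality with
   z = u first gives |w - u|^2 <= nu |v - u|^2. *)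
Lemma inexP_sq_dist (C : set V) (phi : V -> V -> V -> R) (u v w z : V)
    (g th la gb lb : R) :
  rel_err_tol g th la phi -> C u -> inexP C phi u v w -> C z ->
  0 <= g <= gb -> 0 <= th <= 1/2 -> 0 <= la <= lb -> lb < 1/2 ->
  | w - z |2 <= | v - z |2 + ((1 + 2 * gb) / (1 - 2 * lb) - 1) * | v - u |2.
Proof.
move=> /(_ u v w)[_] hphi Cu [_ hproj] Cz /andP[g0 ggb] /andP[th0 th1]
  /andP[la0 llb] lb1.
set P := phi u v w in hphi hproj; set nu := (1 + 2 * gb) / (1 - 2 * lb).
set A := | w - u |2; set B := | v - u |2; set D := | v - w |2.
rewrite !enorm_sq -/B -/A dotp_distC -/D in hphi.
have three_pt y : | w - y |2 = | v - y |2 - D + 2 * dotp (v - w) (y - w).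
  rewrite [in RHS](_ : v - y = (v - w) - (y - w)); last first.
    by rewrite opprB addrA subrK.
  by rewrite [in RHS]dotp_sqrB (dotp_distC y) /D; ring.
have [A0 B0 D0] : [/\ 0 <= A, 0 <= B & 0 <= D] by split; apply: dotp_ge0.
have nuE : nu * (1 - 2 * lb) = 1 + 2 * gb by rewrite /nu divfK //; lra.
have hgB : g * B <= gb * B by apply: ler_wpM2r.
have hthD : th * D <= 1/2 * D by apply: ler_wpM2r.
have hlaA : la * A <= lb * A by apply: ler_wpM2r.
have hA : A <= nu * B.
  have hAu : A <= B - D + 2 * P by rewrite /A three_pt -/B; have := hproj u Cu; lra.
  rewrite -(ler_pM2r (_ : 0 < 1 - 2 * lb)); last by lra.
  by rewrite mulrAC nuE; lra.
have hlbA : lb * A <= lb * (nu * B) by apply: ler_wpM2l => //; lra.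
have := congr1 ( *%R^~ B) nuE; rewrite /= three_pt; have := hproj z Cz; lra.
Qed.

Lemma eps_subgrad_sq_dist (f : V -> R) (eps t : R) (u z s : V) :
  eps_subdiff f eps u s -> 0 <= t ->
  | u - t *: s - z |2
    <= | u - z |2 - 2 * t * (f u - f z) + 2 * t * eps + t ^+ 2 * | s |2.
Proof.
move=> /(_ z) hsub t0.
have hsz : f u - f z - eps <= dotp (u - z) s.
  by move: hsub; rewrite dotpC -(opprB u z) dotpNl; lra.
rewrite [u - _ - z]addrAC [leLHS]dotp_sqrB dotpZr !dotpZl dotpZr.
by have := ler_wpM2l t0 hsz; lra.
Qed.

Lemma inexact_subgrad_descent (f : V -> R) (C : set V) (phi : V -> V -> V -> R)
    (u w z s : V) (t eps alpha mu g th la gb lb : R) :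
  eps_subdiff f eps u s -> rel_err_tol g th la phi ->
  C u -> inexP C phi u (u - t *: s) w -> C z ->
  0 <= g <= gb -> 0 <= th <= 1/2 -> 0 <= la <= lb -> lb < 1/2 ->
  0 <= t -> t * enorm s <= alpha -> t <= alpha ->
  0 <= eps <= mu * alpha -> 0 <= mu ->
  2 * t * (f u - f z)
    <= | u - z |2 - | w - z |2
       + ((1 + 2 * gb) / (1 - 2 * lb) + 2 * mu) * alpha ^+ 2.
Proof.
move=> hsub hphi Cu hw Cz hg hth hla lb1 t0 ts ta /andP[eps0 epsmu] mu0.
have hproj := inexP_sq_dist hphi Cu hw Cz hg hth hla lb1.
have hgrad := eps_subgrad_sq_dist z hsub t0.
rewrite (_ : u - t *: s - u = (- t) *: s) ?dotpZl ?dotpZr in hproj;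
  last by rewrite addrAC subrr add0r scaleNr.
set nu := (1 + 2 * gb) / (1 - 2 * lb) in hproj *.
have nu1 : 1 <= nu by rewrite /nu ler_pdivlMr; case/andP: hg; case/andP: hla; lra.
have hts : t ^+ 2 * | s |2 <= alpha ^+ 2.
  rewrite -enorm_sq -exprMn ler_sqr ?nnegrE ?mulr_ge0 ?enorm_ge0 //.
  exact: le_trans (mulr_ge0 t0 (enorm_ge0 s)) ts.
have hnu := ler_wpM2l (le_trans ler01 nu1) hts.
have heps : t * eps <= alpha * (mu * alpha) by apply: ler_pM.
clearbody nu; lra.
Qed.

End InexactStep.

Section ConvexBounds.
Variables (R : realType) (n : nat).
Notation V := 'rV[R]_n.
Variable f : V -> R.
Hypothesis cvx : convex_fun f.

Lemma convex_segment_le (p q : V) (l : R) :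
  0 <= l <= 1 -> f (l *: p + (1 - l) *: q) <= Num.max (f p) (f q).
Proof.
move=> /[dup] l01 /andP[l0 l1]; apply: le_trans (cvx p q l01) _.
have hp : f p <= Num.max (f p) (f q) by rewrite le_max lexx.
have hq : f q <= Num.max (f p) (f q) by rewrite le_max lexx orbT.
have l1' : 0 <= 1 - l by lra.
have := ler_wpM2l l0 hp; have := ler_wpM2l l1' hq; lra.
Qed.

Lemma convex_line_le (e : V) (a r : R) :
  `|r| <= a -> f (r *: e) <= Num.max (f (a *: e)) (f ((- a) *: e)).
Proof.
move=> ra; have [a0 | a_neq0] := eqVneq a 0.
  by move: ra; rewrite a0 normr_le0 => /eqP ->; rewrite oppr0 le_max lexx.
have /andP[ra1 ra2] : - a <= r <= a by rewrite -ler_norml.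
have apos : 0 < a by rewrite lt_neqAle eq_sym a_neq0 (le_trans _ ra).
pose l := (r + a) / (2 * a).
have -> : r *: e = l *: (a *: e) + (1 - l) *: ((- a) *: e).
  by rewrite !scalerA -scalerDl /l; congr (_ *: _); field; lra.
apply: convex_segment_le; rewrite /l ler_pdivrMr ?divr_ge0 //; lra.
Qed.

Lemma convex_opposite_lb (x : V) : 2 * f 0 - f (- x) <= f x.
Proof.
have h12 : 0 <= (1/2 : R) <= 1 by apply/andP; split; lra.
have := cvx x (- x) h12.
have -> : 1 - 1/2 = 1/2 :> R by field.
by rewrite scalerN subrr; lra.
Qed.

(* Induction on m: a point of the (m+1)-box is the
   midpoint of a point of the m-box (of radius 2M) and of a point on the m-th
   axis, where the bound comes from convex_line_le. *)
Lemma convex_bounded_on_partial_box (m : nat) (M : R) : 0 < M ->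
  exists B, forall y : V, (forall i : 'I_n, (m <= i)%N -> y 0 i = 0) ->
    (forall i, `|y 0 i| <= M) -> f y <= B.
Proof.
elim: m M => [|m IH] M M0.
  exists (f 0) => y y0 _.
  by rewrite (_ : y = 0) //; apply/rowP => i; rewrite mxE y0.
case: (ltnP m n) => [mn | nm]; last first.
  have [B HB] := IH M M0; exists B => y _; apply: HB => i mi.
  by move: (leq_trans nm mi); rewrite leqNgt ltn_ord.
have [B1 HB1] := IH (2 * M) (mulr_gt0 (ltr0Sn _ 1) M0).
pose im : 'I_n := Ordinal mn; pose e : V := delta_mx 0 im.
exists (Num.max B1 (Num.max (f ((2 * M) *: e)) (f ((- (2 * M)) *: e)))).
move=> y y0 yM; pose r := y 0 im; pose y' := y - r *: e.
have y'E i : y' 0 i = if i == im then 0 else y 0 i.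
  by rewrite !mxE /=; case: eqP => [-> | _]; rewrite ?mulr1 ?subrr ?mulr0 ?subr0.
have -> : y = (1/2) *: (2 *: y') + (1 - 1/2) *: ((2 * r) *: e).
  rewrite !scalerA /y' (_ : 1/2 * 2 = 1 :> R) ?scale1r; last by field.
  by rewrite (_ : (1 - 1/2) * (2 * r) = r :> R) ?subrK //; field.
apply: le_trans (convex_segment_le _ _ _) _; first by apply/andP; split; lra.
rewrite ge_max; apply/andP; split; rewrite le_max; apply/orP; [left | right].
  apply: HB1 => i; rewrite mxE y'E; case: eqP => [_ | /eqP ni].
  - by rewrite mulr0.
  - by move=> mi; rewrite y0 ?mulr0 // ltn_neqAle mi andbT eq_sym.
  - by rewrite mulr0 normr0; lra.
  - by rewrite normrM ger0_norm //; have := yM i; lra.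
apply: convex_line_le; rewrite normrM ger0_norm //; have := yM im; lra.
Qed.

Lemma convex_bounded_on_box (M : R) : 0 < M ->
  exists B, forall y : V, (forall i, `|y 0 i| <= M) -> f y <= B.
Proof.
move=> /(convex_bounded_on_partial_box n)[B HB]; exists B => y yM.
by apply: HB => // i; rewrite leqNgt ltn_ord.
Qed.

(* If f <= B on the box of radius K + 1 and x lies in the box of radius K, then
   every nonzero eps-subgradient at x has norm at most 2 (B - f 0) + eps:
   test the subgradient inequality at x + s/|s|. *)
Lemma eps_subgrad_norm_le (B eps K : R) (x s : V) :
  (forall y : V, (forall i, `|y 0 i| <= K + 1) -> f y <= B) ->
  (forall i, `|x 0 i| <= K) -> s != 0 -> eps_subdiff f eps x s ->
  enorm s <= 2 * (B - f 0) + eps.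
Proof.
move=> HB xK s_neq0 /(_ (x + (enorm s)^-1 *: s)).
have s_pos : 0 < enorm s.
  rewrite lt_neqAle enorm_ge0 andbT; apply: contra s_neq0 => /eqP s0.
  by apply/eqP/rowP => i; apply/eqP; rewrite mxE -normr_le0 s0 coord_le_enorm.
rewrite (addrC x) addrK dotpZr -enorm_sq expr2 mulKf ?lt0r_neq0 //.
have hu i : `|((enorm s)^-1 *: s) 0 i| <= 1.
  rewrite mxE normrM ger0_norm ?invr_ge0 ?enorm_ge0 // mulrC.
  by rewrite ler_pdivrMr // mul1r coord_le_enorm.
have h1 : f ((enorm s)^-1 *: s + x) <= B.
  apply: HB => i; rewrite mxE addrC; apply: le_trans (ler_normD _ _) _.
  exact: lerD (xK i) (hu i).
have h2 : f (- x) <= B by apply: HB => i; rewrite mxE normrN; have := xK i; lra.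
have := convex_opposite_lb x; lra.
Qed.

End ConvexBounds.

Lemma cvg_coord_bounded (R : realType) (n : nat) (x : nat -> 'rV[R]_n)
    (xs : 'rV[R]_n) :
  x @ \oo --> xs -> exists K, forall k i, `|x k 0 i| <= K.
Proof.
move=> /cvgP/cvg_seq_bounded/ex_bound[|K /= HK].
  exact: (@globally_properfilter _ _ 0%N).
by exists K => k i; apply: le_trans (coord_le_mxnorm _ i) (HK k I).
Qed.

Lemma bounded_eps_subgradients (R : realType) (n : nat) (f : 'rV[R]_n -> R)
    (x s : nat -> 'rV[R]_n) (eps : nat -> R) (xs : 'rV[R]_n) :
  convex_fun f -> x @ \oo --> xs ->
  (forall k, s k != 0 /\ eps_subdiff f (eps k) (x k) (s k)) ->
  (forall k, eps k <= eps 0%N) ->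
  exists c, 0 < c /\ forall k, enorm (s k) <= c.
Proof.
move=> cvx /cvg_coord_bounded[K xK] hs eps_le.
have K1 : 0 < `|K| + 1 by rewrite ltr_wpDl.
have [B HB] := convex_bounded_on_box cvx K1.
exists (Num.max 1 (2 * (B - f 0) + eps 0%N)); split; first by rewrite lt_max ltr01.
move=> k; rewrite le_max; apply/orP; right; have [s_neq0 hsub] := hs k.
apply: le_trans (eps_subgrad_norm_le cvx HB _ s_neq0 hsub) _.
  by move=> i; apply: le_trans (xK k i) (ler_norm K).
by rewrite lerD2l.
Qed.

Lemma exogenous_stepsize_bounds (R : realFieldType) (alpha e c : R) :
  0 <= alpha -> e <= c ->
  let t := alpha / Num.max 1 e in
  [/\ t * e <= alpha, t <= alpha & alpha <= Num.max 1 c * t].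
Proof.
move=> al0 ec t.
have e_le : e <= Num.max 1 e by rewrite le_max lexx orbT.
have m1 : 1 <= Num.max 1 e by rewrite le_max lexx.
have m0 : 0 < Num.max 1 e by apply: lt_le_trans m1.
have t0 : 0 <= t by rewrite /t divr_ge0 // ltW.
have tE : t * Num.max 1 e = alpha by rewrite /t mulfVK ?lt0r_neq0.
have mc : Num.max 1 e <= Num.max 1 c by apply: le_max2.
split.
- by rewrite -[leRHS]tE ler_wpM2l.
- by rewrite -[leRHS]tE ler_peMr.
- by rewrite -[leLHS]tE mulrC ler_wpM2r.
Qed.

Lemma telescoping_le (R : realDomainType) (a d b : nat -> R) :
  (forall k, a k <= d k - d k.+1 + b k) ->
  forall N, \sum_(k < N) a k <= d 0%N - d N + \sum_(k < N) b k.
Proof.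
move=> hab; elim=> [|N IH]; first by rewrite !big_ord0 subrr addr0.
by rewrite !big_ord_recr /=; have := hab N; lra.
Qed.

Lemma min_le_weighted_rate (R : realFieldType) (g t alpha : nat -> R)
    (Gamma E : R) (N : nat) :
  (forall k, 0 <= t k) -> (forall k, alpha k <= Gamma * t k) ->
  0 <= Gamma -> 0 <= E -> 0 < \sum_(k < N.+1) alpha k ->
  2 * \sum_(k < N.+1) t k * g k <= E ->
  \big[Num.min/g 0%N]_(k < N.+1) g k
    <= Gamma * E / (2 * \sum_(k < N.+1) alpha k).
Proof.
move=> t0 al_le G0 E0 Sa0 hE.
set m := \big[Num.min/g 0%N]_(k < N.+1) g k.
have [m_le0 | m_pos] := lerP m 0.
  by apply: le_trans m_le0 _; rewrite divr_ge0 ?mulr_ge0 // ltW.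
rewrite ler_pdivlMr ?mulr_gt0 //.
have hsum : m * \sum_(k < N.+1) alpha k <= Gamma * \sum_(k < N.+1) t k * g k.
  rewrite !mulr_sumr; apply: ler_sum => k _.
  have mg : m <= g k by apply: bigmin_le.
  apply: le_trans (ler_wpM2l (ltW m_pos) (al_le k)) _.
  by rewrite mulrCA ler_wpM2l // mulrC ler_wpM2l.
have := ler_wpM2l G0 hE; lra.
Qed.

Theorem mainTheorem6 (R : realType) (n : nat)
  (f : 'rV[R]_n -> R) (C : set 'rV[R]_n)
  (gbar thbar lbar mu : R)
  (gam th lam alpha eps t : nat -> R)
  (phi : nat -> 'rV[R]_n -> 'rV[R]_n -> 'rV[R]_n -> R)
  (x s : nat -> 'rV[R]_n) (xstar : 'rV[R]_n) :
  (* problem data *)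
  convex_fun f -> C !=set0 -> closed C -> convex_set C ->
  (* standing assumptions on the tolerance parameters *)
  0 <= gbar -> 0 <= thbar < 1/2 -> 0 <= lbar < 1/2 ->
  (forall k, 0 <= gam k < gbar) -> (forall k, 0 <= th k < thbar) ->
  (forall k, 0 <= lam k < lbar) ->
  (* exogenous stepsize rule *)
  0 <= mu ->
  (forall k, 0 <= alpha k) -> (forall k, 0 <= eps k) ->
  {homo eps : i j / (i <= j)%N >-> j <= i} ->
  series alpha @ \oo --> +oo ->
  cvgn (series (fun k => alpha k ^+ 2)) ->
  (forall k, eps k <= mu * alpha k) ->
  (* Subgradient-InexP iterates (infinite sequence) *)
  C (x 0%N) ->
  (forall k, ~ subdiff f (x k) 0) ->
  (forall k, s k != 0 /\ eps_subdiff f (eps k) (x k) (s k)) ->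
  (forall k, t k = alpha k / Num.max 1 (enorm (s k)) /\ 0 < t k) ->
  (forall k, rel_err_tol (gam k) (th k) (lam k) (phi k)) ->
  (forall k, inexP C (phi k) (x k) (x k - t k *: s k) (x k.+1)) ->
  (* convergence to a solution *)
  Omega_star f C xstar ->
  x @ \oo --> xstar ->
  exists c : R, 0 < c /\ (forall k, enorm (s k) <= c) /\
    let Gamma := Num.max 1 c in
    let nu := (1 + 2 * gbar) / (1 - 2 * lbar) in
    let rho := nu + 2 * mu in
    forall N : nat,
      \big[Num.min/(f (x 0%N) - fstar f C)]_(k < N.+1) (f (x k) - fstar f C)
      <= Gamma * (enorm (x 0%N - xstar) ^+ 2
                  + rho * \sum_(k < N.+1) alpha k ^+ 2)
               / (2 * \sum_(k < N.+1) alpha k).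
Proof.
move=> cvx _ _ _ gb0 /andP[_ thb] /andP[_ lb] hgam hth hlam mu0 al0 eps0 eps_dec
  _ _ epsmu Cx0 _ hs ht hphi hP [Cxs fxs] xcvg.
have inC k : C (x k) by elim: k => // k _; case: (hP k).
have [c [c0 hc]] :=
  bounded_eps_subgradients cvx xcvg hs (fun k => eps_dec 0%N k (leq0n k)).
exists c; split => //; split => // Gamma nu rho N.
have steps k : [/\ t k * enorm (s k) <= alpha k, t k <= alpha k
                 & alpha k <= Gamma * t k].
  by rewrite (ht k).1; apply: exogenous_stepsize_bounds.
pose d k := dotp (x k - xstar) (x k - xstar).
have descent k : 2 * (t k * (f (x k) - fstar f C))
                 <= d k - d k.+1 + rho * alpha k ^+ 2.
  have /andP[g0 gk] := hgam k; have /andP[th0 thk] := hth k.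
  have /andP[l0 lk] := hlam k.
  have [ts ta _] := steps k.
  rewrite mulrA -fxs /d /rho /nu.
  apply: (inexact_subgrad_descent (hs k).2 (hphi k) (inC k) (hP k) Cxs) ts ta _ mu0.
  - by rewrite g0 ltW.
  - by rewrite th0 /=; lra.
  - by rewrite l0 ltW.
  - exact: lb.
  - exact: ltW (ht k).2.
  - by rewrite eps0 epsmu.
have nu0 : 0 <= nu by rewrite divr_ge0 //; lra.
have rho0 : 0 <= rho by apply: addr_ge0 => //; apply: mulr_ge0.
rewrite enorm_sq.
apply: (min_le_weighted_rate (g := fun k => f (x k) - fstar f C) (t := t)) => //.
- by move=> k; exact: ltW (ht k).2.
- by move=> k; have [] := steps k.
- by rewrite le_max ler01.
- by rewrite addr_ge0 ?dotp_ge0 // mulr_ge0 // sumr_ge0 // => k _; rewrite sqr_ge0.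
- rewrite big_ord_recl; have [_ ta _] := steps 0%N; have := (ht 0%N).2.
  have : 0 <= \sum_(i < N) alpha (bump 0 i) by rewrite sumr_ge0.
  lra.
- have := telescoping_le descent N.+1; rewrite -!mulr_sumr /d /=.
  have := dotp_ge0 (x N.+1 - xstar); lra.
Qed.
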